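(* Let $T=(T,\eta,\mu)$ be a monad on a category $\mathbb{C}$ such that for every object $X$ the pair $\eta_{TX},T\eta_X:TX\to TTX$ has an equalizer $\theta_X:DX\to TX$, and let $D$ be the associated monad. Then $D$ is idempotent if and only if for every object $X$ the morphism $T\theta_X:TDX\to TTX$ is monic. In particular, $D$ is idempotent whenever $T$ maps regular monomorphisms to monomorphisms.
   Context: The monad $D$: for $g:Y\to Z$ in $\mathbb{C}$, $Dg:DY\to DZ$ is the unique morphism with $\theta_Z\circ Dg=Tg\circ\theta_Y$; the unit $e_X:X\to DX$ is the unique morphism with $\theta_X\circ e_X=\eta_X$; the multiplication $m_X:DDX\to DX$ is the unique morphism with $\theta_X\circ m_X=\mu_X\circ T\theta_X\circ\theta_{DX}$. (Equivalently, morphisms $X\to DY$ correspond, via composition with $\theta_Y$, to morphisms $f^\sharp:X\to TY$ with $\eta_{TY}\circ f^\sharp=T\eta_Y\circ f^\sharp$, and the Kleisli category of $D$ is the corresponding subcategory of $\mathsf{Kl}(T)$.) A monad is idempotent if its multiplication is a natural isomorphism. A regular monomorphism is a morphism which is an equalizer of some pair of morphisms. *)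

Set Implicit Arguments.
Unset Strict Implicit.

Record Category := {
  Ob :> Type;
  Hom : Ob -> Ob -> Type;
  idm : forall A, Hom A A;
  comp : forall A B C, Hom B C -> Hom A B -> Hom A C;
  comp_assoc : forall A B C D (h : Hom C D) (g : Hom B C) (f : Hom A B),
      comp h (comp g f) = comp (comp h g) f;
  comp_id_l : forall A B (f : Hom A B), comp (idm B) f = f;
  comp_id_r : forall A B (f : Hom A B), comp f (idm A) = f
}.

Arguments Hom {c} _ _.
Arguments idm {c} _.
Arguments comp {c A B C} _ _.
Notation "g \o f" := (comp g f) (at level 40, left associativity).

Record Endofunctor (C : Category) := {
  fobj :> C -> C;
  fmap : forall A B, Hom A B -> Hom (fobj A) (fobj B);
  fmap_id : forall A, fmap (idm A) = idm (fobj A);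
  fmap_comp : forall A B D (g : Hom B D) (f : Hom A B),
      fmap (g \o f) = fmap g \o fmap f
}.
Arguments fmap {C} _ {A B} _.

Record Monad (C : Category) := {
  mT :> Endofunctor C;
  eta : forall X : C, Hom X (mT X);
  mu : forall X : C, Hom (mT (mT X)) (mT X);
  eta_nat : forall X Y (f : Hom X Y), eta Y \o f = fmap mT f \o eta X;
  mu_nat : forall X Y (f : Hom X Y),
      mu Y \o fmap mT (fmap mT f) = fmap mT f \o mu X;
  mu_eta_l : forall X, mu X \o eta (mT X) = idm (mT X);
  mu_eta_r : forall X, mu X \o fmap mT (eta X) = idm (mT X);
  mu_assoc : forall X, mu X \o fmap mT (mu X) = mu X \o mu (mT X)
}.
Arguments eta {C} _ X.
Arguments mu {C} _ X.

Definition monic (C : Category) (A B : C) (f : Hom A B) : Prop :=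
  forall Z (g h : Hom Z A), f \o g = f \o h -> g = h.

Definition is_iso (C : Category) (A B : C) (f : Hom A B) : Prop :=
  exists g : Hom B A, g \o f = idm A /\ f \o g = idm B.

Definition is_equalizer (C : Category) (A B E : C) (f g : Hom A B) (e : Hom E A)
  : Prop :=
  f \o e = g \o e /\
  forall Z (h : Hom Z A), f \o h = g \o h ->
    exists k : Hom Z E, e \o k = h /\ forall k', e \o k' = h -> k' = k.

Definition regular_mono (C : Category) (A E : C) (m : Hom E A) : Prop :=
  exists (B : C) (f g : Hom A B), is_equalizer f g m.

Definition preserves_regmono_to_mono (C : Category) (F : Endofunctor C) : Prop :=
  forall (A E : C) (m : Hom E A), regular_mono m -> monic (fmap F m).

(* Given, for each X, an equalizer theta X : D X -> T X of eta_{TX}, T eta_X,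
   the multiplication m_X : DDX -> DX of the associated monad D is the unique
   morphism with theta_X o m_X = mu_X o T theta_X o theta_{DX}. *)
Definition is_D_mult {C : Category} (T : Monad C) (D : C -> C)
  (theta : forall X : C, Hom (D X) (T X))
  (m : forall X : C, Hom (D (D X)) (D X)) : Prop :=
  forall X : C, theta X \o m X = mu T X \o fmap T (theta X) \o theta (D X).

(* D is idempotent: its multiplication is an isomorphism (componentwise;
   naturality of the multiplication is automatic). *)
Definition D_idempotent {C : Category} (T : Monad C) (D : C -> C)
  (theta : forall X : C, Hom (D X) (T X)) : Prop :=
  exists m : forall X : C, Hom (D (D X)) (D X),
    @is_D_mult C T D theta m /\ forall X : C, is_iso (m X).
Arguments is_D_mult {C} T D theta m.
Arguments D_idempotent {C} T D theta.
Arguments preserves_regmono_to_mono {C} F.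

(* Equations between morphisms into D are checked after composing with the
   monic θ.  The multiplication m_X of D has the two sections e_{DX} and D e_X
   (the unit laws of D).  If Tθ_X is monic, e_{DX} is also a retraction of m_X,
   so m_X is invertible.  Conversely, if m_X is invertible its sections
   coincide, e_{DX} = D e_X; composing with θ_{DX} gives T e_X ∘ θ_X = η_{DX},
   so μ_{DX} ∘ TT e_X is a retraction of Tθ_X.  The last claim holds because
   θ_X, being an equalizer, is a regular monomorphism. *)

From Stdlib Require Import IndefiniteDescription.

Section CategoryFacts.
Context {C : Category}.

Lemma comp_assoc_eq {A B E : C} {b : Hom B E} {c : Hom A B} {x : Hom A E} :
  b \o c = x -> forall Z (d : Hom Z A), b \o (c \o d) = x \o d.
Proof. intros H Z d. rewrite comp_assoc, H. reflexivity. Qed.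

Lemma split_mono_monic {A B : C} {f : Hom A B} (r : Hom B A) :
  r \o f = idm A -> monic f.
Proof.
  intros Hrf Z g h Hgh.
  rewrite <- (comp_id_l g), <- (comp_id_l h), <- Hrf, <- !comp_assoc, Hgh.
  reflexivity.
Qed.

Lemma iso_section_unique {A B : C} {f : Hom A B} {s s' : Hom B A} :
  is_iso f -> f \o s = idm B -> f \o s' = idm B -> s = s'.
Proof.
  intros [g [Hgf _]] Hs Hs'.
  rewrite <- (comp_id_l s), <- (comp_id_l s'), <- Hgf, <- !comp_assoc, Hs, Hs'.
  reflexivity.
Qed.

Lemma equalizer_monic {A B E : C} {f g : Hom A B} {e : Hom E A} :
  is_equalizer f g e -> monic e.
Proof.
  intros [He Hu] Z k1 k2 Hk.
  assert (Hq : f \o (e \o k2) = g \o (e \o k2)).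
  { rewrite !comp_assoc, He. reflexivity. }
  destruct (Hu Z (e \o k2) Hq) as [k [_ Hk_unique]].
  rewrite (Hk_unique k1 Hk), (Hk_unique k2 eq_refl). reflexivity.
Qed.

Lemma equalizer_regular_mono {A B E : C} {f g : Hom A B} {e : Hom E A} :
  is_equalizer f g e -> regular_mono e.
Proof. intro He. exists B, f, g. exact He. Qed.

Lemma equalizer_lift {A B E : C} {f g : Hom A B} {e : Hom E A}
  {Z : C} {h : Hom Z A} :
  is_equalizer f g e -> f \o h = g \o h -> {k : Hom Z E | e \o k = h}.
Proof.
  intros [_ Hu] Hh. apply constructive_indefinite_description.
  destruct (Hu Z h Hh) as [k [Hk _]]. exists k. exact Hk.
Qed.

Lemma fmap_comp_eq (F : Endofunctor C) {A B B' E : C}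
  {f : Hom A B} {g : Hom B E} {h : Hom A B'} {k : Hom B' E} :
  g \o f = k \o h -> fmap F g \o fmap F f = fmap F k \o fmap F h.
Proof. intro H. rewrite <- !fmap_comp, H. reflexivity. Qed.

Lemma fmap_comp_idm (F : Endofunctor C) {A B : C} {f : Hom A B} {g : Hom B A} :
  g \o f = idm A -> fmap F g \o fmap F f = idm (F A).
Proof. intro H. rewrite <- fmap_comp, H. apply fmap_id. Qed.

End CategoryFacts.

Ltac assoc_r := repeat rewrite <- comp_assoc.
Tactic Notation "rewrite_comp" constr(H) :=
  first [rewrite (comp_assoc_eq H) | rewrite H]; assoc_r.

Section EqualizerMonad.
Context {C : Category} {T : Monad C} {D : C -> C}
  {theta : forall X : C, Hom (D X) (T X)}.
Hypothesis theta_equalizer : forall X : C,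
  is_equalizer (eta T (T X)) (fmap T (eta T X)) (theta X).

Let theta_eq X : eta T (T X) \o theta X = fmap T (eta T X) \o theta X :=
  proj1 (theta_equalizer X).

Lemma theta_monic X : monic (theta X).
Proof. exact (equalizer_monic (theta_equalizer X)). Qed.

Definition D_unit X : Hom X (D X) :=
  proj1_sig (equalizer_lift (theta_equalizer X) (eta_nat T (eta T X))).

Lemma theta_D_unit X : theta X \o D_unit X = eta T X.
Proof. exact (proj2_sig (equalizer_lift (theta_equalizer X) _)). Qed.

Lemma eta_T_fmap_theta {X Y} (f : Hom X Y) :
  eta T (T Y) \o (fmap T f \o theta X) = fmap T (eta T Y) \o (fmap T f \o theta X).
Proof.
  rewrite_comp (eta_nat T (fmap T f)).
  rewrite_comp (theta_eq X).
  rewrite_comp (fmap_comp_eq T (eq_sym (eta_nat T f))).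
  reflexivity.
Qed.

Definition D_map {X Y} (f : Hom X Y) : Hom (D X) (D Y) :=
  proj1_sig (equalizer_lift (theta_equalizer Y) (eta_T_fmap_theta f)).

Lemma theta_D_map {X Y} (f : Hom X Y) : theta Y \o D_map f = fmap T f \o theta X.
Proof. exact (proj2_sig (equalizer_lift (theta_equalizer Y) _)). Qed.

Lemma eta_T_mult_theta X :
  eta T (T X) \o (mu T X \o (fmap T (theta X) \o theta (D X)))
  = fmap T (theta X) \o theta (D X).
Proof.
  rewrite_comp (eta_nat T (mu T X)).
  rewrite_comp (eta_nat T (fmap T (theta X))).
  rewrite_comp (theta_eq (D X)).
  rewrite_comp (fmap_comp_eq T (eq_sym (eta_nat T (theta X)))).
  rewrite_comp (fmap_comp_idm T (mu_eta_l T X)).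
  apply comp_id_l.
Qed.

Lemma fmap_eta_mult_theta X :
  fmap T (eta T X) \o (mu T X \o (fmap T (theta X) \o theta (D X)))
  = fmap T (theta X) \o theta (D X).
Proof.
  rewrite_comp (eq_sym (mu_nat T (eta T X))).
  rewrite_comp (fmap_comp_eq T (eq_sym (theta_eq X))).
  rewrite_comp (mu_eta_r T (T X)).
  apply comp_id_l.
Qed.

Definition D_mult X : Hom (D (D X)) (D X) :=
  proj1_sig (equalizer_lift (theta_equalizer X)
    (eq_trans (eta_T_mult_theta X) (eq_sym (fmap_eta_mult_theta X)))).

Lemma is_D_mult_D_mult : is_D_mult T D theta D_mult.
Proof.
  intro X. rewrite <- comp_assoc.
  exact (proj2_sig (equalizer_lift (theta_equalizer X) _)).
Qed.

Lemma is_D_mult_eq {m} : is_D_mult T D theta m -> forall X, m X = D_mult X.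
Proof.
  intros Hm X. apply theta_monic. rewrite Hm, is_D_mult_D_mult. reflexivity.
Qed.

Lemma D_mult_D_unit X : D_mult X \o D_unit (D X) = idm (D X).
Proof.
  apply theta_monic. rewrite comp_id_r, comp_assoc, is_D_mult_D_mult. assoc_r.
  rewrite_comp (theta_D_unit (D X)).
  rewrite_comp (eq_sym (eta_nat T (theta X))).
  rewrite_comp (mu_eta_l T X).
  apply comp_id_l.
Qed.

Lemma D_mult_D_map_unit X : D_mult X \o D_map (D_unit X) = idm (D X).
Proof.
  apply theta_monic. rewrite comp_id_r, comp_assoc, is_D_mult_D_mult. assoc_r.
  rewrite_comp (theta_D_map (D_unit X)).
  rewrite_comp (eq_sym (fmap_comp T (theta X) (D_unit X))).
  rewrite theta_D_unit.
  rewrite_comp (mu_eta_r T X).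
  apply comp_id_l.
Qed.

Lemma D_unit_D_mult X :
  monic (fmap T (theta X)) -> D_unit (D X) \o D_mult X = idm (D (D X)).
Proof.
  intro HTmonic. apply theta_monic. apply HTmonic.
  rewrite comp_id_r. assoc_r.
  rewrite_comp (theta_D_unit (D X)).
  rewrite_comp (eq_sym (eta_nat T (theta X))).
  rewrite_comp (is_D_mult_D_mult X).
  apply eta_T_mult_theta.
Qed.

Lemma fmap_unit_theta_of_iso X :
  is_iso (D_mult X) -> fmap T (D_unit X) \o theta X = eta T (D X).
Proof.
  intro Hiso.
  rewrite <- theta_D_map, <- theta_D_unit.
  f_equal. apply (iso_section_unique Hiso).
  - apply D_mult_D_map_unit.
  - apply D_mult_D_unit.
Qed.

Lemma fmap_theta_retraction X :
  fmap T (D_unit X) \o theta X = eta T (D X) ->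
  mu T (D X) \o fmap T (fmap T (D_unit X)) \o fmap T (theta X) = idm (T (D X)).
Proof.
  intro Hunit. rewrite <- comp_assoc, <- fmap_comp, Hunit. apply mu_eta_r.
Qed.

Lemma monic_of_D_idempotent :
  D_idempotent T D theta -> forall X, monic (fmap T (theta X)).
Proof.
  intros [m [Hm Hiso]] X.
  specialize (Hiso X). rewrite (is_D_mult_eq Hm X) in Hiso.
  eapply split_mono_monic, fmap_theta_retraction, fmap_unit_theta_of_iso, Hiso.
Qed.

Lemma D_idempotent_of_monic :
  (forall X, monic (fmap T (theta X))) -> D_idempotent T D theta.
Proof.
  intro HTmonic. exists D_mult. split; [apply is_D_mult_D_mult |].
  intro X. exists (D_unit (D X)). split.
  - apply D_unit_D_mult, HTmonic.
  - apply D_mult_D_unit.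
Qed.

End EqualizerMonad.

Theorem lemma5p7 (C : Category) (T : Monad C)
  (D : C -> C) (theta : forall X : C, Hom (D X) (T X))
  (Htheta : forall X : C,
      is_equalizer (eta T (T X)) (fmap T (eta T X)) (theta X)) :
  (D_idempotent T D theta <-> forall X : C, monic (fmap T (theta X))) /\
  (preserves_regmono_to_mono T -> D_idempotent T D theta).
Proof.
  split; [split |].
  - exact (monic_of_D_idempotent Htheta).
  - exact (D_idempotent_of_monic Htheta).
  - intro Hpres. apply (D_idempotent_of_monic Htheta). intro X.
    apply Hpres, (equalizer_regular_mono (Htheta X)).
Qed.
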